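(* Let $\Sigma_{\tau_d}=(\mathbb{R}^n,P,\mathcal P,F)$ be a switched system with $\mathcal P=\mathcal S_{\tau_d}(\mathbb{R}^+_0,P)$, let $\tau_s,\eta,\varepsilon>0$ with $\tau_d=N\tau_s$ for a positive integer $N$. Assume that for every $p\in P$ there is a $\delta$-GAS Lyapunov function $V_p$ for $\Sigma_p$, that there exists $\mu\ge1$ with $V_p(x,y)\le\mu V_{p'}(x,y)$ for all $x,y\in\mathbb{R}^n$ and $p,p'\in P$, and that for every $p$ there is a $\mathcal K_\infty$ function $\gamma_p$ with $|V_p(x,y)-V_p(x,z)|\le\gamma_p(\|y-z\|)$ for all $x,y,z\in\mathbb{R}^n$; let $\gamma=\max_p\gamma_p$. If $\tau_d>\frac{\log\mu}{\kappa}$ and $$\eta\le\min\Big\{\gamma^{-1}\Big(\frac{\frac1\mu-e^{-\kappa\tau_d}}{1-e^{-\kappa\tau_d}}(1-e^{-\kappa\tau_s})\underline\alpha(\varepsilon)\Big),\ \overline\alpha^{-1}\big(\underline\alpha(\varepsilon)\big)\Big\},$$ then $T_{\tau_s}(\Sigma_{\tau_d})\sim_\varepsilon T_{\tau_s,\eta}(\Sigma_{\tau_d})$.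
   Context: A switched system is $\Sigma=(\mathbb{R}^n,P,\mathcal P,F)$ where $P=\{1,\dots,m\}$; $\mathcal S(\mathbb{R}^+_0,P)$ is the set of piecewise constant, right-continuous functions $\mathbb{R}^+_0\to P$ with finitely many discontinuities (switching times) on every bounded interval; $\mathcal S_{\tau_d}(\mathbb{R}^+_0,P)$ is the subset of signals whose switching times $t_1<t_2<\cdots$ satisfy $t_1\ge\tau_d$ and $t_i-t_{i-1}\ge\tau_d$ for $i\ge2$. $F=\{f_1,\dots,f_m\}$ with each $f_p$ locally Lipschitz and all solutions of $\dot x=f_p(x)$ defined for all $t\ge0$. Subsystem $\Sigma_p$: $\dot x=f_p(x)$; $\mathbf x(t,x,p)$ is its solution at time $t$ from $x$. A smooth $V_p:\mathbb{R}^n\times\mathbb{R}^n\to\mathbb{R}^+_0$ is a $\delta$-GAS Lyapunov function for $\Sigma_p$ if there exist $\mathcal K_\infty$ functions $\underline\alpha_p,\overline\alpha_p$ and $\kappa_p>0$ with $\underline\alpha_p(\|x-y\|)\le V_p(x,y)\le\overline\alpha_p(\|x-y\|)$ and $\frac{\partial V_p}{\partial x}(x,y)f_p(x)+\frac{\partial V_p}{\partial y}(x,y)f_p(y)\le-\kappa_p V_p(x,y)$ for all $x,y$ ($\mathcal K_\infty$: continuous, strictly increasing, unbounded, zero at zero). Set $\underline\alpha=\min_p\underline\alpha_p$, $\overline\alpha=\max_p\overline\alpha_p$, $\kappa=\min_p\kappa_p$. A transition system is $T=(Q,L,\to,O,H,I)$: states, labels, transition relation $\to\subseteq Q\times L\times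 Q$ (written $q\xrightarrow{l}q'$), outputs, output map $H:Q\to O$, initial states $I\subseteq Q$; metric if $O$ has a metric $d$. For metric $T_1,T_2$ with common $L,O$ and $\varepsilon\ge0$, $R\subseteq Q_1\times Q_2$ is an $\varepsilon$-approximate bisimulation relation if for all $(q_1,q_2)\in R$: $d(H_1(q_1),H_2(q_2))\le\varepsilon$; every $q_1\xrightarrow{l}_1q_1'$ is matched by some $q_2\xrightarrow{l}_2q_2'$ with $(q_1',q_2')\in R$; and symmetrically. $T_1\sim_\varepsilon T_2$ if such $R$ exists with every initial state of $T_1$ related to some initial state of $T_2$ and vice versa. $T_{\tau_s}(\Sigma_{\tau_d})$: states $\mathbb{R}^n\times P\times\{0,\dots,N-1\}$; labels $P$; $(x,p,i)\xrightarrow{l}(x',p',i')$ iff $l=p$, $x'=\mathbf x(\tau_s,x,p)$ and one of: (a) $i<N-1$, $p'=p$, $i'=i+1$; (b) $i=N-1$, $p'=p$, $i'=N-1$; (c) $i=N-1$, $p'\neq p$, $i'=0$. Outputs $\mathbb{R}^n$, $H((x,p,i))=x$, initial states $\mathbb{R}^n\times P\times\{0\}$. Lattice $[\mathbb{R}^n]_\eta=\{q\in\mathbb{R}^n: q_i=k_i\frac{2\eta}{\sqrt n},\ k_i\in\mathbb Z\}$. $T_{\tau_s,\eta}(\Sigma_{\tau_d})$: states $[\mathbb{R}^n]_\eta\times P\times\{0,\dots,N-1\}$; labels $P$; $(q,p,i)\xrightarrow{l}(q',p',i')$ iff $l=p$, $\|\mathbf x(\tau_s,q,p)-q'\|\le\eta$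 and one of (a),(b),(c) above holds; outputs $\mathbb{R}^n$, $H((q,p,i))=q$; initial states $[\mathbb{R}^n]_\eta\times P\times\{0\}$. Both use the Euclidean metric on $\mathbb{R}^n$. *)

From mathcomp Require Import all_boot.
From Stdlib Require Import Reals ClassicalEpsilon.
Set Implicit Arguments. Unset Strict Implicit. Unset Printing Implicit Defensive.
Open Scope R_scope.

Definition vec (n : nat) := 'I_n -> R.

Definition vsub n (x y : vec n) : vec n := fun i => x i - y i.

Definition enorm n (x : vec n) : R := sqrt (\big[Rplus/0]_(i < n) (x i * x i)).
Definition edist n (x y : vec n) : R := enorm (vsub x y).

(* finite min / max over a nonempty finite type (0 if empty, never used then) *)
Definition fmin (T : finType) (g : T -> R) : R :=
  match enum T with [::] => 0 | p0 :: _ => \big[Rmin/g p0]_(p : T) g p end.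
Definition fmax (T : finType) (g : T -> R) : R :=
  match enum T with [::] => 0 | p0 :: _ => \big[Rmax/g p0]_(p : T) g p end.

(* K_infinity functions on R^+_0 (given as functions R -> R, only values on
   [0,oo) matter): continuous, strictly increasing, unbounded, zero at zero. *)
Definition Kinf (a : R -> R) : Prop :=
  a 0 = 0 /\
  (forall r, 0 <= r -> forall e, 0 < e -> exists d, 0 < d /\
      forall s, 0 <= s -> Rabs (s - r) < d -> Rabs (a s - a r) < e) /\
  (forall r s, 0 <= r -> r < s -> a r < a s) /\
  (forall M, exists r, 0 <= r /\ M < a r).

Definition Kinv (a : R -> R) (y : R) : R :=
  epsilon (inhabits 0) (fun r => 0 <= r /\ a r = y).

Definition upd (I : eqType) (z : I -> R) (j : I) (t : R) : I -> R :=
  fun i => if i == j then z i + t else z i.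

Definition partial_lim (I : eqType) (F : (I -> R) -> R) (j : I) (z : I -> R)
  (l : R) : Prop := derivable_pt_lim (fun t => F (upd z j t)) 0 l.

Definition contF (I : Type) (F : (I -> R) -> R) : Prop :=
  forall z e, 0 < e -> exists d, 0 < d /\
    forall w, (forall i, Rabs (w i - z i) < d) -> Rabs (F w - F z) < e.

(* C^infinity: all iterated partial derivatives exist and are continuous;
   D js is the iterated partial derivative along the list of coordinates js. *)
Definition smooth (I : finType) (F : (I -> R) -> R) : Prop :=
  exists D : seq I -> (I -> R) -> R,
    D [::] = F /\ (forall js, contF (D js)) /\
    (forall js j z, partial_lim (D js) j z (D (j :: js) z)).

(* V : R^n x R^n -> R seen as a function of 2n real variables *)
Definition Vcat n (V : vec n -> vec n -> R) : ('I_n + 'I_n -> R) -> R :=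
  fun z => V (fun i => z (inl i)) (fun i => z (inr i)).

Definition dGAS_Lyapunov n (f : vec n -> vec n) (V : vec n -> vec n -> R)
  (alo ahi : R -> R) (kap : R) : Prop :=
  smooth (Vcat V) /\ (forall x y, 0 <= V x y) /\
  Kinf alo /\ Kinf ahi /\ 0 < kap /\
  (forall x y, alo (edist x y) <= V x y /\ V x y <= ahi (edist x y)) /\
  (forall x y, exists dVx dVy : vec n,
     (forall i, derivable_pt_lim (fun t => V (upd x i t) y) 0 (dVx i)) /\
     (forall i, derivable_pt_lim (fun t => V x (upd y i t)) 0 (dVy i)) /\
     \big[Rplus/0]_(i < n) (dVx i * f x i) + \big[Rplus/0]_(i < n) (dVy i * f y i)
       <= - kap * V x y).

Definition locally_lipschitz n (f : vec n -> vec n) : Prop :=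
  forall x, exists r L, 0 < r /\ forall y z, edist y x < r -> edist z x < r ->
    edist (f y) (f z) <= L * edist y z.

Definition is_solution n (f : vec n -> vec n) (x0 : vec n) (phi : R -> vec n) : Prop :=
  phi 0 = x0 /\
  (forall i e, 0 < e -> exists d, 0 < d /\
      forall s, 0 <= s -> s < d -> Rabs (phi s i - phi 0 i) < e) /\
  (forall t, 0 < t -> forall i, derivable_pt_lim (fun s => phi s i) t (f (phi t) i)).

Record TS (L O : Type) := mkTS {
  TQ : Type;
  Ttrans : TQ -> L -> TQ -> Prop;
  TH : TQ -> O;
  TI : TQ -> Prop }.

Definition approx_bisim_rel (L O : Type) (d : O -> O -> R) (T1 T2 : TS L O)
  (eps : R) (Rel : TQ T1 -> TQ T2 -> Prop) : Prop :=
  forall q1 q2, Rel q1 q2 ->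
    d (TH q1) (TH q2) <= eps /\
    (forall l q1', Ttrans q1 l q1' -> exists q2', Ttrans q2 l q2' /\ Rel q1' q2') /\
    (forall l q2', Ttrans q2 l q2' -> exists q1', Ttrans q1 l q1' /\ Rel q1' q2').

Definition approx_bisimilar (L O : Type) (d : O -> O -> R) (T1 T2 : TS L O)
  (eps : R) : Prop :=
  exists Rel : TQ T1 -> TQ T2 -> Prop, @approx_bisim_rel L O d T1 T2 eps Rel /\
    (forall q1, TI q1 -> exists q2, TI q2 /\ Rel q1 q2) /\
    (forall q2, TI q2 -> exists q1, TI q1 /\ Rel q1 q2).

Definition mode_step m N (p : 'I_m) (i : 'I_N) (p' : 'I_m) (i' : 'I_N) : Prop :=
  ((nat_of_ord i < N - 1)%nat /\ p' = p /\ nat_of_ord i' = (nat_of_ord i + 1)%nat) \/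
  (nat_of_ord i = (N - 1)%nat /\ p' = p /\ nat_of_ord i' = (N - 1)%nat) \/
  (nat_of_ord i = (N - 1)%nat /\ p' <> p /\ nat_of_ord i' = 0%nat).

(* T_{tau_s}(Sigma_{tau_d}); xflow p t x is the solution x(t,x,p) *)
Definition T_exact n m N (xflow : 'I_m -> R -> vec n -> vec n) (tau_s : R)
  : TS 'I_m (vec n) :=
  {| TQ := (vec n * 'I_m * 'I_N)%type;
     Ttrans := fun q l q' =>
       l = q.1.2 /\ q'.1.1 = xflow q.1.2 tau_s q.1.1 /\ mode_step q.1.2 q.2 q'.1.2 q'.2;
     TH := fun q => q.1.1;
     TI := fun q => nat_of_ord q.2 = 0%nat |}.

Definition in_lattice n (eta : R) (q : vec n) : Prop :=
  forall i, exists k : Z, q i = IZR k * (2 * eta / sqrt (INR n)).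

Definition T_abs n m N (xflow : 'I_m -> R -> vec n -> vec n) (tau_s eta : R)
  : TS 'I_m (vec n) :=
  {| TQ := ({q : vec n | in_lattice eta q} * 'I_m * 'I_N)%type;
     Ttrans := fun q l q' =>
       l = q.1.2 /\ edist (xflow q.1.2 tau_s (proj1_sig q.1.1)) (proj1_sig q'.1.1) <= eta /\
       mode_step q.1.2 q.2 q'.1.2 q'.2;
     TH := fun q => proj1_sig q.1.1;
     TI := fun q => nat_of_ord q.2 = 0%nat |}.

From HB Require Import structures.
From mathcomp Require Import all_boot.
From Stdlib Require Import Reals ClassicalEpsilon Lra FunctionalExtensionality.
Set Implicit Arguments. Unset Strict Implicit. Unset Printing Implicit Defensive.
Open Scope R_scope.

(* States of the two transition systems are related when they share mode and
   switching counter i and the Lyapunov function of the current mode stays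
   below a budget B i, where B 0 = A := min_p alo_p(eps) and
   B (i+1) = a B i + c, a = exp(-kappa tau_s) bounding the contraction over one
   sampling period and c bounding the quantisation error gamma(eta).
   - Analysis: a multivariable chain rule (continuous partials) turns the
     delta-GAS inequality into V(x(t),y(t)) <= exp(-kappa t) V(x,y).
   - Bookkeeping: one sampled step keeps the recursion for B; the dwell-time
     condition makes mu B N <= A, so a mode switch (costing the factor mu)
     restarts at B 0; B i <= A forces outputs within eps, and the choice of
     eta makes every eta-close pair start in budget B 0.
   - The sublevel relation is then an eps-approximate bisimulation, using that
     every point is eta-close to the lattice [R^n]_eta. *)

HB.instance Definition _ := Monoid.isComLaw.Build R 0 Rplus
  (fun a b c => esym (Rplus_assoc a b c)) Rplus_comm Rplus_0_l.

Lemma fin_delta_seq (I : eqType) (P : I -> R -> Prop) (l : seq I) :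
  (forall i, exists d, 0 < d /\ P i d) ->
  (forall i d d', 0 < d' <= d -> P i d -> P i d') ->
  exists d, 0 < d /\ forall i, i \in l -> P i d.
Proof.
move=> H1 H2; elim: l => [|a l [d [Hd IH]]].
  by exists 1; split; [lra|].
have [d1 [Hd1 Pa]] := H1 a.
exists (Rmin d d1); split; first by apply Rmin_pos.
move=> i; rewrite in_cons => /orP [/eqP ->|Hi].
  apply: H2 Pa; split; [by apply Rmin_pos| apply Rmin_r].
apply: H2 (IH _ Hi); split; [by apply Rmin_pos| apply Rmin_l].
Qed.

Lemma fin_delta (I : finType) (P : I -> R -> Prop) :
  (forall i, exists d, 0 < d /\ P i d) ->
  (forall i d d', 0 < d' <= d -> P i d -> P i d') ->
  exists d, 0 < d /\ forall i, P i d.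
Proof.
move=> H1 H2; have [d [Hd H]] := @fin_delta_seq I P (enum I) H1 H2.
by exists d; split => // i; apply: H; rewrite mem_enum.
Qed.

Lemma derivable_lim_cont (g : R -> R) t l : derivable_pt_lim g t l ->
  forall e, 0 < e -> exists d, 0 < d /\ forall s, Rabs (s - t) < d -> Rabs (g s - g t) < e.
Proof.
move=> Hg e He.
have [d [Hd Hc]] := @derivable_continuous_pt g t (exist _ l Hg) e He.
exists d; split => // s Hs; case: (Req_dec s t) => [->|Hne].
  by rewrite Rminus_diag Rabs_R0.
by apply: Hc; split; [split; [done|auto]|].
Qed.

Definition setc (I : eqType) (z : I -> R) (j : I) (u : R) : I -> R :=
  fun i => if i == j then u else z i.

Lemma derivable_setc (I : eqType) (F : (I -> R) -> R) (j : I) (w : I -> R) (u0 l : R) :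
  partial_lim F j (setc w j u0) l -> derivable_pt_lim (fun u => F (setc w j u)) u0 l.
Proof.
move=> H eps Heps; have [d Hd] := H eps Heps; exists d => h h0 hd.
have E : forall s, F (setc w j (u0 + s)) = F (upd (setc w j u0) j s).
  move=> s; congr F; apply: functional_extensionality => i.
  by rewrite /upd /setc; case: (i == j).
have E0 := E 0; rewrite Rplus_0_r in E0.
by rewrite E E0; have := Hd h h0 hd; rewrite Rplus_0_l.
Qed.

(* Mean value estimate: near z0 the increment of F in coordinate j is
   (b - a) D1 z0 up to e |b - a|, by continuity of the partial D1. *)
Lemma partial_increment (I : eqType) (F D1 : (I -> R) -> R) (j : I) (z0 : I -> R)
  (Hp : forall z, partial_lim F j z (D1 z)) (Hc : contF D1) e (He : 0 < e) :
  exists d, 0 < d /\ forall w a b, (forall i, Rabs (w i - z0 i) < d) ->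
    Rabs (a - z0 j) < d -> Rabs (b - z0 j) < d ->
    Rabs (F (setc w j b) - F (setc w j a) - (b - a) * D1 z0) <= e * Rabs (b - a).
Proof.
have [d [Hd Hcd]] := Hc z0 e He.
exists d; split => // w a b Hw Ha Hb.
have [c [Ec Hcab]] := MVT_abs (fun u => F (setc w j u) - D1 z0 * u)
  (fun u => D1 (setc w j u) - D1 z0 * 1) a b
  (fun c _ => derivable_pt_lim_minus _ _ _ _ _ (derivable_setc (Hp _))
     (derivable_pt_lim_scal id (D1 z0) c 1 (derivable_pt_lim_id c))).
have -> : F (setc w j b) - F (setc w j a) - (b - a) * D1 z0 =
  (F (setc w j b) - D1 z0 * b) - (F (setc w j a) - D1 z0 * a) by ring.
rewrite Ec Rmult_1_r; apply: Rmult_le_compat_r; first exact: Rabs_pos.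
left; apply: Hcd => i; rewrite /setc; case: eqP => [->|_] //.
move: Ha Hb Hcab; rewrite /Rmin /Rmax; case: Rle_dec => _;
move=> /Rabs_def2 [? ?] /Rabs_def2 [? ?] [? ?]; apply: Rabs_def1; lra.
Qed.

Section ChainRule.
Variables (I : finType) (F : (I -> R) -> R) (D1 : I -> (I -> R) -> R).
Hypothesis Hp : forall j z, partial_lim F j z (D1 j z).
Hypothesis Hc : forall j, contF (D1 j).
Variables (Phi : R -> I -> R) (t : R) (Phi' : I -> R).
Hypothesis HPhi : forall i, derivable_pt_lim (fun s => Phi s i) t (Phi' i).

Definition moved (s : seq I) (h : R) : I -> R :=
  fun i => if i \in s then Phi (t + h) i else Phi t i.

Lemma moved_close e : 0 < e ->
  exists d, 0 < d /\ forall s h, Rabs h < d -> forall i, Rabs (moved s h i - Phi t i) < e.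
Proof.
move=> He.
have Hcoord : forall i, exists d, 0 < d /\
    forall h, Rabs h < d -> Rabs (Phi (t + h) i - Phi t i) < e.
  move=> i; have [d [Hd Hd']] := derivable_lim_cont (HPhi i) He.
  exists d; split => // h Hh; apply: Hd'.
  by have -> : t + h - t = h by ring.
have [d [Hd H]] := fin_delta Hcoord (fun i d d' Hdd P h Hh => P h ltac:(lra)).
exists d; split => // s h Hh i; rewrite /moved.
by case: (i \in s); [apply: H | rewrite Rminus_diag Rabs_R0].
Qed.

Lemma moved_cons_quotient (j : I) (s : seq I) : j \notin s ->
  forall e, 0 < e -> exists d, 0 < d /\ forall h, h <> 0 -> Rabs h < d ->
    Rabs ((F (moved (j :: s) h) - F (moved s h)) / h - D1 j (Phi t) * Phi' j) < e.
Proof.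
move=> js e He.
set z0 := Phi t; set Dz := D1 j z0; set P' := Phi' j.
have HDz : 0 < Rabs Dz + 1 by have := Rabs_pos Dz; lra.
have HP' : 0 < Rabs P' + 1 by have := Rabs_pos P'; lra.
set e1 := e / (2 * (Rabs P' + 1)).
have He1 : 0 < e1 by apply: Rdiv_lt_0_compat; lra.
have [d3 [Hd3 Hinc]] := partial_increment z0 (Hp j) (Hc j) He1.
have [d4 [Hd4 Hclose]] := moved_close Hd3.
set r := Rmin 1 (e / (2 * (Rabs Dz + 1))).
have Hr : 0 < r by apply: Rmin_pos; [lra| apply: Rdiv_lt_0_compat; lra].
have [d2 Hq] := HPhi j Hr.
have Hd2 := cond_pos d2.
exists (Rmin d2 d4); split; first exact: Rmin_pos.
move=> h h0 Hh.
have Hh2 : Rabs h < d2 by have := Rmin_l d2 d4; lra.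
have Hh4 : Rabs h < d4 by have := Rmin_r d2 d4; lra.
set w := moved s h; set a := z0 j; set b := Phi (t + h) j.
have Eb : moved (j :: s) h = setc w j b.
  apply: functional_extensionality => i; rewrite /w /moved /setc in_cons.
  by case: eqP => [->|_] //=.
have Ea : w = setc w j a.
  apply: functional_extensionality => i; rewrite /w /moved /setc.
  by case: eqP => [->|_] //=; rewrite (negbTE js).
have Hb : Rabs (b - z0 j) < d3.
  by have := Hclose [:: j] h Hh4 j; rewrite /moved mem_seq1 eqxx.
have Kinc := Hinc w a b (Hclose s h Hh4)
  ltac:(by rewrite /a Rminus_diag Rabs_R0) Hb.
set q := (b - a) / h.
have Kq : Rabs (q - P') < r by exact: Hq h h0 Hh2.
have Eq : (F (moved (j :: s) h) - F w) / h - Dz * P' =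
    (F (setc w j b) - F (setc w j a) - (b - a) * Dz) / h + (q - P') * Dz.
  by rewrite Eb -Ea /q; field.
rewrite -/w Eq.
have T1 : Rabs ((F (setc w j b) - F (setc w j a) - (b - a) * Dz) / h) <= e / 2.
  have hp : 0 < Rabs h by apply: Rabs_pos_lt.
  apply: (Rle_trans _ (e1 * (Rabs P' + 1))); last by rewrite /e1; right; field; lra.
  rewrite /Rdiv Rabs_mult Rabs_inv.
  apply: (Rle_trans _ (e1 * Rabs q)).
    rewrite /q /Rdiv Rabs_mult Rabs_inv -Rmult_assoc.
    apply: Rmult_le_compat_r; [left; exact: Rinv_0_lt_compat | exact: Kinc].
  apply: Rmult_le_compat_l; first lra.
  have Hr1 : r <= 1 by apply: Rmin_l.
  have := Rabs_triang_inv q P'; lra.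
have T2 : Rabs ((q - P') * Dz) < e / 2.
  rewrite Rabs_mult.
  have Hr2 : r <= e / (2 * (Rabs Dz + 1)) by apply: Rmin_r.
  have Ee : e / 2 = e / (2 * (Rabs Dz + 1)) * (Rabs Dz + 1) by field; lra.
  have := Rabs_pos Dz; have := Rabs_pos (q - P'); nra.
have := Rabs_triang ((F (setc w j b) - F (setc w j a) - (b - a) * Dz) / h) ((q - P') * Dz).
lra.
Qed.

Lemma moved_quotient (s : seq I) : uniq s ->
  forall e, 0 < e -> exists d, 0 < d /\ forall h, h <> 0 -> Rabs h < d ->
    Rabs ((F (moved s h) - F (Phi t)) / h
          - \big[Rplus/0]_(i <- s) (D1 i (Phi t) * Phi' i)) < e.
Proof.
elim: s => [_ e He|j s IH].
  exists 1; split => [|h h0 _]; first lra.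
  have -> : moved [::] h = Phi t.
    by apply: functional_extensionality => i; rewrite /moved in_nil.
  by rewrite big_nil Rminus_diag /Rdiv Rmult_0_l Rminus_diag Rabs_R0.
rewrite cons_uniq => /andP [js us] e He.
have [d1 [Hd1 H1]] := IH us (e / 2) ltac:(lra).
have [d2 [Hd2 H2]] := @moved_cons_quotient j s js (e / 2) ltac:(lra).
exists (Rmin d1 d2); split; first exact: Rmin_pos.
move=> h h0 Hh; rewrite big_cons.
have := H1 h h0 ltac:(have := Rmin_l d1 d2; lra).
have := H2 h h0 ltac:(have := Rmin_r d1 d2; lra).
set A := F (moved (j :: s) h); set B := F (moved s h); set C := F (Phi t).
set L := \big[Rplus/0]_(i <- s) _; set M := D1 j (Phi t) * Phi' j => K2 K1.
have -> : (A - C) / h - (M + L) = ((A - B) / h - M) + ((B - C) / h - L) by field.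
have := Rabs_triang ((A - B) / h - M) ((B - C) / h - L); lra.
Qed.

Lemma chain_rule :
  derivable_pt_lim (fun s => F (Phi s)) t (\big[Rplus/0]_(i : I) (D1 i (Phi t) * Phi' i)).
Proof.
move=> e He.
have [d [Hd H]] := moved_quotient (index_enum_uniq I) He.
exists (mkposreal d Hd) => h h0 Hh.
have <- : moved (index_enum I) h = Phi (t + h).
  by apply: functional_extensionality => i; rewrite /moved mem_index_enum.
exact: H.
Qed.

End ChainRule.

Definition pos_reals (s : R) : Prop := 0 < s.

Lemma derivable_right_limit (g : R -> R) l :
  derivable_pt_lim g 0 l -> limit1_in g pos_reals (g 0) 0.
Proof.
move=> Hg e He; have [d [Hd H]] := derivable_lim_cont Hg He.
by exists d; split => // s [_ Hs]; apply: H.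
Qed.

Lemma right_limit_ge (g : R -> R) (l c d : R) : 0 < d ->
  limit1_in g pos_reals l 0 -> (forall s, 0 < s < d -> c <= g s) -> c <= l.
Proof.
move=> Hd Hl Hc; apply: Rnot_lt_le => Hlc.
have [a [Ha H]] := Hl (c - l) ltac:(lra).
set s := Rmin a d / 2.
have Hm : 0 < Rmin a d by apply: Rmin_pos.
have Hs : 0 < s < d by have := Rmin_r a d; rewrite /s; lra.
have Hsa : Rabs (s - 0) < a.
  by rewrite Rminus_0_r Rabs_right; have := Rmin_l a d; rewrite /s; lra.
have := H s (conj (proj1 Hs) Hsa); rewrite /dist /= /R_dist => /Rabs_def2.
have := Hc s Hs; lra.
Qed.

Lemma nonincreasing_of_nonpos_deriv (U U' : R -> R) :
  (forall s, 0 < s -> derivable_pt_lim U s (U' s)) -> (forall s, 0 < s -> U' s <= 0) ->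
  forall a b, 0 < a -> a <= b -> U b <= U a.
Proof.
move=> HU HU' a b Ha Hab; case: (Rle_lt_or_eq_dec a b Hab) => [Hlt|->]; last lra.
have [c [E Hc]] := MVT_cor2 U U' a b Hlt (fun c Hc => HU c ltac:(lra)).
have := HU' c ltac:(lra); nra.
Qed.

(* Comparison lemma: W' <= - kap W on (0, oo) and right-continuity at 0 give
   W t <= exp (- kap t) W 0; exp (kap t) W t is nonincreasing. *)
Lemma decay_of_differential_inequality (W W' : R -> R) (kap : R) :
  limit1_in W pos_reals (W 0) 0 ->
  (forall s, 0 < s -> derivable_pt_lim W s (W' s)) ->
  (forall s, 0 < s -> W' s <= - kap * W s) ->
  forall t, 0 <= t -> W t <= exp (- kap * t) * W 0.
Proof.
move=> HW0 HW HW' t Ht.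
have Hexp : forall c, derivable_pt_lim (fun u => exp (kap * u)) c (exp (kap * c) * kap).
  move=> c; apply: (derivable_pt_lim_comp (fun u => kap * u) exp).
    by rewrite -[kap in X in derivable_pt_lim _ _ X]Rmult_1_r;
       apply: (derivable_pt_lim_scal id); apply: derivable_pt_lim_id.
  exact: derivable_pt_lim_exp.
set U := fun u => exp (kap * u) * W u.
have HUmono : forall a b, 0 < a -> a <= b -> U b <= U a.
  apply: (@nonincreasing_of_nonpos_deriv U
    (fun u => exp (kap * u) * kap * W u + exp (kap * u) * W' u)).
    by move=> s Hs; apply: derivable_pt_lim_mult; [exact: Hexp | exact: HW].
  move=> s Hs; have := HW' s Hs; have := exp_pos (kap * s); nra.
have HUlim : limit1_in U pos_reals (W 0) 0.
  have := limit_mul _ _ _ _ _ _ (derivable_right_limit (Hexp 0)) HW0.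
  by rewrite Rmult_0_r exp_0 Rmult_1_l.
have HUt : U t <= W 0.
  case: (Rle_lt_or_eq_dec 0 t Ht) => [Htp|<-].
    by apply: (right_limit_ge Htp HUlim) => s [Hs Hst]; apply: HUmono; lra.
  by rewrite /U Rmult_0_r exp_0 Rmult_1_l; lra.
have -> : W t = exp (- kap * t) * U t.
  rewrite /U -Rmult_assoc -exp_plus.
  have -> : - kap * t + kap * t = 0 by ring.
  by rewrite exp_0 Rmult_1_l.
by apply: Rmult_le_compat_l; [left; apply: exp_pos | exact: HUt].
Qed.

Definition catv n (x y : vec n) : 'I_n + 'I_n -> R :=
  fun k => match k with inl i => x i | inr i => y i end.

Lemma partial_Vcat_inl n (V : vec n -> vec n -> R) (x y : vec n) i l :
  partial_lim (Vcat V) (inl i) (catv x y) l ->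
  derivable_pt_lim (fun t => V (upd x i t) y) 0 l.
Proof.
suff -> : (fun t => V (upd x i t) y) = (fun t => Vcat V (upd (catv x y) (inl i) t)) by [].
apply: functional_extensionality => t; rewrite /Vcat.
by congr V; apply: functional_extensionality => k; rewrite /upd /catv.
Qed.

Lemma partial_Vcat_inr n (V : vec n -> vec n -> R) (x y : vec n) i l :
  partial_lim (Vcat V) (inr i) (catv x y) l ->
  derivable_pt_lim (fun t => V x (upd y i t)) 0 l.
Proof.
suff -> : (fun t => V x (upd y i t)) = (fun t => Vcat V (upd (catv x y) (inr i) t)) by [].
apply: functional_extensionality => t; rewrite /Vcat.
by congr V; apply: functional_extensionality => k; rewrite /upd /catv.
Qed.

Lemma sum_sumType (I J : finType) (F : I + J -> R) :
  \big[Rplus/0]_(k : I + J) F k =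
  \big[Rplus/0]_(i : I) F (inl i) + \big[Rplus/0]_(j : J) F (inr j).
Proof. by rewrite big_sumType. Qed.

Section LyapunovDecay.
Variables (n : nat) (f : vec n -> vec n) (V : vec n -> vec n -> R).
Variables (alo ahi : R -> R) (kap : R).
Hypothesis HV : dGAS_Lyapunov f V alo ahi kap.
Variable D : seq ('I_n + 'I_n) -> ('I_n + 'I_n -> R) -> R.
Hypothesis D0 : D [::] = Vcat V.
Hypothesis Dcont : forall js, contF (D js).
Hypothesis Dpartial : forall js j z, partial_lim (D js) j z (D (j :: js) z).

Lemma lyapunov_rate (x y : vec n) :
  \big[Rplus/0]_(k : 'I_n + 'I_n) (D [:: k] (catv x y) * catv (f x) (f y) k)
    <= - kap * V x y.
Proof.
have [_ [_ [_ [_ [_ [_ Hder]]]]]] := HV.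
have [dVx [dVy [Hx [Hy Hsum]]]] := Hder x y.
have Ex : forall i, D [:: inl i] (catv x y) = dVx i.
  move=> i; apply: (uniqueness_limite (fun t => V (upd x i t) y) 0) => //.
  by apply: partial_Vcat_inl; rewrite -D0; apply: Dpartial.
have Ey : forall i, D [:: inr i] (catv x y) = dVy i.
  move=> i; apply: (uniqueness_limite (fun t => V x (upd y i t)) 0) => //.
  by apply: partial_Vcat_inr; rewrite -D0; apply: Dpartial.
rewrite sum_sumType.
under eq_bigr do rewrite Ex.
by under [X in _ + X]eq_bigr do rewrite Ey.
Qed.

Variable xf : R -> vec n -> vec n.
Hypothesis Hsol : forall x, is_solution f x (fun t => xf t x).

Lemma lyapunov_right_limit (x y : vec n) :
  limit1_in (fun s => V (xf s x) (xf s y)) pos_reals (V (xf 0 x) (xf 0 y)) 0.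
Proof.
move=> e He; have [d [Hd HD]] := Dcont [::] (catv (xf 0 x) (xf 0 y)) He.
have [_ [Hxc _]] := Hsol x; have [_ [Hyc _]] := Hsol y.
have [d' [Hd' Hclose]] := @fin_delta _
  (fun k d' => forall s, 0 <= s -> s < d' ->
     Rabs (catv (xf s x) (xf s y) k - catv (xf 0 x) (xf 0 y) k) < d)
  (fun k => match k with inl i => Hxc i d Hd | inr i => Hyc i d Hd end)
  (fun k d1 d2 Hd12 P s H0 Hs => P s H0 ltac:(lra)).
exists d'; split => // s [Hs0 Hs]; rewrite /pos_reals in Hs0.
rewrite /dist /= /R_dist Rminus_0_r in Hs.
rewrite Rabs_right in Hs; last lra.
have := HD (catv (xf s x) (xf s y)) (fun k => Hclose k s ltac:(lra) Hs).
by rewrite D0.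
Qed.

Lemma lyapunov_decay (x y : vec n) (t : R) : 0 <= t ->
  V (xf t x) (xf t y) <= exp (- kap * t) * V x y.
Proof.
have [x0 _] := Hsol x; have [y0 _] := Hsol y; simpl in x0, y0.
rewrite -{2}x0 -{2}y0.
apply: (decay_of_differential_inequality (lyapunov_right_limit x y)
  (W' := fun s => \big[Rplus/0]_(k : 'I_n + 'I_n)
     (D [:: k] (catv (xf s x) (xf s y)) * catv (f (xf s x)) (f (xf s y)) k))).
- move=> s Hs.
  have -> : (fun s => V (xf s x) (xf s y)) = (fun s => D [::] (catv (xf s x) (xf s y))).
    by rewrite D0.
  apply: (chain_rule (fun j z => Dpartial [::] j z) (fun j => Dcont [:: j])).
  have [_ [_ Hxd]] := Hsol x; have [_ [_ Hyd]] := Hsol y.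
  by case=> i; [apply: Hxd | apply: Hyd].
- by move=> s _; apply: lyapunov_rate.
Qed.

End LyapunovDecay.

Lemma dGAS_decay n (f : vec n -> vec n) (V : vec n -> vec n -> R) alo ahi kap
  (HV : dGAS_Lyapunov f V alo ahi kap) (xf : R -> vec n -> vec n)
  (Hsol : forall x, is_solution f x (fun t => xf t x)) x y t :
  0 <= t -> V (xf t x) (xf t y) <= exp (- kap * t) * V x y.
Proof. by have [[D [D0 [Dc Dp]]] _] := HV; exact: (lyapunov_decay HV D0 Dc Dp Hsol). Qed.

Lemma bigmax_ge (T : eqType) (F : T -> R) x0 (l : seq T) p :
  p \in l -> F p <= \big[Rmax/x0]_(i <- l) F i.
Proof.
elim: l => [|a l IH] //; rewrite in_cons big_cons => /orP [/eqP ->|H].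
  exact: Rmax_l.
apply: Rle_trans (IH H) _; exact: Rmax_r.
Qed.

Lemma bigmin_le (T : eqType) (F : T -> R) x0 (l : seq T) p :
  p \in l -> \big[Rmin/x0]_(i <- l) F i <= F p.
Proof.
elim: l => [|a l IH] //; rewrite in_cons big_cons => /orP [/eqP ->|H].
  exact: Rmin_l.
apply: Rle_trans _ (IH H); exact: Rmin_r.
Qed.

Lemma fmax_ge (T : finType) (g : T -> R) p : g p <= fmax g.
Proof.
rewrite /fmax; case E: (enum T) => [|p0 l].
  by have := mem_enum T p; rewrite E in_nil.
apply: bigmax_ge; exact: mem_index_enum.
Qed.

Lemma fmax_le (T : finType) (g : T -> R) b (p : T) : (forall p, g p <= b) -> fmax g <= b.
Proof.
move=> H; rewrite /fmax; case E: (enum T) => [|p0 l].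
  by have := mem_enum T p; rewrite E in_nil.
apply: (big_ind (fun v => v <= b)) => // *; exact: Rmax_lub.
Qed.

Lemma fmin_le (T : finType) (g : T -> R) p : fmin g <= g p.
Proof.
rewrite /fmin; case E: (enum T) => [|p0 l].
  by have := mem_enum T p; rewrite E in_nil.
apply: bigmin_le; exact: mem_index_enum.
Qed.

Lemma fmin_gt (T : finType) (g : T -> R) b (p : T) : (forall p, b < g p) -> b < fmin g.
Proof.
move=> H; rewrite /fmin; case E: (enum T) => [|p0 l].
  by have := mem_enum T p; rewrite E in_nil.
apply: (big_ind (fun v => b < v)) => // *; exact: Rmin_glb_lt.
Qed.

Definition cont_nonneg (a : R -> R) : Prop :=
  forall r, 0 <= r -> forall e, 0 < e -> exists d, 0 < d /\
    forall s, 0 <= s -> Rabs (s - r) < d -> Rabs (a s - a r) < e.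

Lemma Kinf_cont a : Kinf a -> cont_nonneg a.
Proof. by case=> _ [H _]. Qed.

Lemma Kinf_mono a : Kinf a -> forall r s, 0 <= r -> r <= s -> a r <= a s.
Proof.
case=> _ [_ [H _]] r s Hr Hrs.
case: (Rle_lt_or_eq_dec r s Hrs) => [/H|->]; [move=> /(_ Hr); lra| lra].
Qed.

Lemma Kinf_le_inv a : Kinf a -> forall r s, 0 <= s -> a r <= a s -> r <= s.
Proof.
case=> _ [_ [H _]] r s Hs Hrs; apply: Rnot_lt_le => Hsr.
have := H s r Hs Hsr; lra.
Qed.

(* Kinv really inverts a function vanishing at 0, continuous and unbounded on
   [0, oo), on positive values (intermediate value theorem). *)
Lemma Kinv_spec (a : R -> R) (y : R) : a 0 = 0 -> cont_nonneg a ->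
  (forall M, exists r, 0 <= r /\ M < a r) -> 0 < y ->
  0 <= Kinv a y /\ a (Kinv a y) = y.
Proof.
move=> a0 ac au yp.
suff [r Hr] : exists r, 0 <= r /\ a r = y.
  by apply: (epsilon_spec (inhabits 0) (fun r => 0 <= r /\ a r = y)); exists r.
have [r1 [Hr1 Hy]] := au y.
have r1p : 0 < r1.
  case: (Rle_lt_or_eq_dec 0 r1 Hr1) => // E; rewrite -E a0 in Hy; lra.
set h := fun s => a (Rabs s) - y.
have hc : continuity h.
  move=> s e He; have [d [Hd H]] := ac (Rabs s) (Rabs_pos s) e He.
  exists d; split => // z [_ Hz]; rewrite /dist /= /R_dist in Hz *; rewrite /h.
  have -> : a (Rabs z) - y - (a (Rabs s) - y) = a (Rabs z) - a (Rabs s) by ring.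
  apply: H; first exact: Rabs_pos.
  exact: Rle_lt_trans (Rabs_triang_inv2 z s) Hz.
have [z [Hz E]] := IVT h 0 r1 hc r1p ltac:(rewrite /h Rabs_R0 a0; lra)
   ltac:(rewrite /h Rabs_right; lra).
exists z; split; first lra.
move: E; rewrite /h Rabs_right; lra.
Qed.

Lemma fmax_cont (T : finType) (G : T -> R -> R) (p0 : T) :
  (forall p, cont_nonneg (G p)) -> cont_nonneg (fun r => fmax (fun p => G p r)).
Proof.
move=> Hc r Hr e He.
have [d [Hd H]] := @fin_delta T
  (fun p d => forall s, 0 <= s -> Rabs (s - r) < d -> Rabs (G p s - G p r) < e / 2)
  (fun p => Hc p r Hr (e / 2) ltac:(lra)) (fun p d d' Hdd P s H0 Hs => P s H0 ltac:(lra)).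
exists d; split => // s Hs Hsr.
have Hup : forall u v, (forall p, G p u < G p v + e / 2) ->
    fmax (fun p => G p u) <= fmax (fun p => G p v) + e / 2.
  move=> u v Huv; apply: (fmax_le p0) => p.
  have := Huv p; have := fmax_ge (fun p => G p v) p; lra.
have Hps : forall p, G p s - G p r < e / 2 /\ - (e / 2) < G p s - G p r.
  by move=> p; apply: Rabs_def2; exact: H.
have := Hup s r (fun p => ltac:(have := Hps p; lra)).
have := Hup r s (fun p => ltac:(have := Hps p; lra)).
move=> ? ?; apply: Rabs_def1; lra.
Qed.

Lemma fmax_Kinv_le (T : finType) (G : T -> R -> R) (p0 : T) (HK : forall p, Kinf (G p))
  (y r : R) : 0 < y -> 0 <= r -> r <= Kinv (fun r => fmax (fun p => G p r)) y ->
  forall p, G p r <= y.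
Proof.
move=> Hy Hr Hle p; set Gmax := fun r => fmax (fun p => G p r).
have Gmax0 : Gmax 0 = 0.
  apply: Rle_antisym.
    by apply: (fmax_le p0) => q; case: (HK q) => -> _; lra.
  by have := fmax_ge (fun p => G p 0) p0; case: (HK p0) => -> _.
have Gunb : forall M, exists r, 0 <= r /\ M < Gmax r.
  move=> M; have [_ [_ [_ HM]]] := HK p0; have [r1 [? ?]] := HM M.
  by exists r1; split => //; rewrite /Gmax; have := fmax_ge (fun p => G p r1) p0; lra.
have [HKpos HKy] := Kinv_spec Gmax0 (fmax_cont p0 (fun p => Kinf_cont (HK p))) Gunb Hy.
apply: Rle_trans (Kinf_mono (HK p) Hr Hle) _.
by rewrite -[X in _ <= X]HKy; exact: (fmax_ge (fun q => G q (Kinv Gmax y)) p).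
Qed.

Lemma edist_pos n (x y : vec n) : 0 <= edist x y.
Proof. exact: sqrt_pos. Qed.

Lemma edist_sym n (x y : vec n) : edist x y = edist y x.
Proof. by rewrite /edist /enorm /vsub; congr sqrt; apply: eq_bigr => i _; ring. Qed.

Lemma edist_self n (x : vec n) : edist x x = 0.
Proof. by rewrite /edist /enorm /vsub big1 ?sqrt_0 // => i _; ring. Qed.

Lemma sum_le_const n (F : 'I_n -> R) K : (forall i, F i <= K) ->
  \big[Rplus/0]_(i < n) F i <= INR n * K.
Proof.
move=> H; apply: (Rle_trans _ (\big[Rplus/0]_(i < n) K)).
  by apply: (big_ind2 (fun a b => a <= b)) => //; [lra | move=> *; lra].
rewrite big_const_ord; elim: n {F H} => [|k IH]; first by rewrite /=; lra.
by rewrite S_INR /=; lra.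
Qed.

(* Every point of R^n lies within eta of the lattice [R^n]_eta: round each
   coordinate to the nearest multiple of the mesh 2 eta / sqrt n. *)
Lemma lattice_near n eta (Heta : 0 < eta) (x : vec n) :
  exists q : vec n, in_lattice eta q /\ edist x q <= eta.
Proof.
case: n x => [|n] x.
  by exists x; split; [case | rewrite edist_self; lra].
set s := 2 * eta / sqrt (INR n.+1).
have Hn : 0 < INR n.+1 by apply: lt_0_INR; apply/ltP.
have Hsq : 0 < sqrt (INR n.+1) by apply: sqrt_lt_R0.
have Hs : 0 < s by rewrite /s; apply: Rdiv_lt_0_compat; lra.
have S2 : s * s = 4 * (eta * eta / INR n.+1).
  have Q := sqrt_sqrt (INR n.+1) ltac:(lra).
  have -> : s * s = 4 * (eta * eta) / (sqrt (INR n.+1) * sqrt (INR n.+1)).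
    by rewrite /s; field; lra.
  by rewrite Q; field; lra.
set k := fun i => (up (x i / s + / 2) - 1)%Z.
exists (fun i => IZR (k i) * s); split; first by move=> i; exists (k i).
have Hterm : forall i, vsub x (fun i => IZR (k i) * s) i * vsub x (fun i => IZR (k i) * s) i
    <= eta * eta / INR n.+1.
  move=> i; rewrite /vsub /k minus_IZR.
  set u := IZR (up (x i / s + / 2)).
  have [A1 A2] : u > x i / s + / 2 /\ u - (x i / s + / 2) <= 1 := archimed _.
  have -> : x i - (u - 1) * s = s * (x i / s - (u - 1)) by field; lra.
  have B : (x i / s - (u - 1)) * (x i / s - (u - 1)) <= / 4 by nra.
  have := Rmult_le_compat_l (s * s) _ _ ltac:(nra) B; rewrite S2; nra.
have := sum_le_const Hterm.
have -> : INR n.+1 * (eta * eta / INR n.+1) = eta * eta by field; lra.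
move=> Hsum; rewrite /edist /enorm -(sqrt_Rsqr eta); last lra.
by apply: sqrt_le_1_alt; rewrite /Rsqr.
Qed.

(* The Lyapunov budget i sampling steps after a switch: B 0 = A and
   B (i+1) = a B i + c. *)
Definition budget (a A c : R) (j : nat) : R := a ^ j * A + c * (1 - a ^ j) / (1 - a).

Section Budget.
Variables (a A c : R).
Hypotheses (Ha0 : 0 < a) (Ha1 : a < 1).

Lemma budget_0 : budget a A c 0 = A.
Proof. by rewrite /budget /=; field; lra. Qed.

Lemma budget_S j : a * budget a A c j + c = budget a A c j.+1.
Proof. by rewrite /budget /=; field; lra. Qed.

Hypothesis Hc : c <= (1 - a) * A.

Lemma budget_nonincr j : budget a A c j.+1 <= budget a A c j.
Proof.
have Hj := pow_lt a j Ha0.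
have -> : budget a A c j.+1 = budget a A c j + a ^ j * (c - (1 - a) * A).
  by rewrite /budget /=; field; lra.
nra.
Qed.

Lemma budget_le j : budget a A c j <= A.
Proof.
elim: j => [|j IH]; first by rewrite budget_0; lra.
exact: Rle_trans (budget_nonincr j) IH.
Qed.

(* Dwell-time bookkeeping: along a counter transition (a), (b) or (c) the
   budget is respected; a switch costs the factor mu and restarts at B 0. *)
Lemma budget_mode (m N : nat) (mu : R) (W : 'I_m -> R) (p p' : 'I_m) (i i' : 'I_N) :
  (0 < N)%nat -> 0 <= mu -> mu * budget a A c N <= A ->
  (forall p p', W p' <= mu * W p) ->
  mode_step p i p' i' -> W p <= budget a A c i.+1 -> W p' <= budget a A c i'.
Proof.
move=> HN Hmu Hsw HW [[_ [-> ->]]|[[E [-> ->]]|[E [_ ->]]]] Hp.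
- by rewrite addn1.
- rewrite E subn1 prednK // in Hp; apply: Rle_trans Hp _.
  by rewrite subn1 -{1}(prednK HN); apply: budget_nonincr.
- rewrite E subn1 prednK // in Hp; rewrite budget_0.
  have := HW p p'; have := Rmult_le_compat_l mu _ _ Hmu Hp; lra.
Qed.

End Budget.

Lemma budget_constants (a A mu : R) (N : nat) :
  0 < a < 1 -> 0 < A -> 1 <= mu -> a ^ N < 1 / mu ->
  let c := (1 / mu - a ^ N) / (1 - a ^ N) * (1 - a) * A in
  0 < c /\ c <= (1 - a) * A /\ mu * budget a A c N = A.
Proof.
move=> [Ha0 Ha1] HA Hmu HaN c.
have HaN0 := pow_lt a N Ha0.
have Hmu' : 1 / mu <= 1.
  by apply: (Rmult_le_reg_l mu); [lra | rewrite /Rdiv Rmult_1_l Rinv_r; lra].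
have Hq : 0 < (1 / mu - a ^ N) / (1 - a ^ N) <= 1.
  split; first by apply: Rdiv_lt_0_compat; lra.
  by apply: (Rmult_le_reg_r (1 - a ^ N)); [lra | rewrite /Rdiv Rmult_assoc Rinv_l; lra].
split; [|split].
- by rewrite /c; apply: Rmult_lt_0_compat => //; apply: Rmult_lt_0_compat; lra.
- by rewrite /c; apply: Rmult_le_compat_r; [lra | nra].
- by rewrite /c /budget; field; split; lra.
Qed.

Lemma exp_nat N x : exp (INR N * x) = exp x ^ N.
Proof.
elim: N => [|N IH]; first by rewrite /= Rmult_0_l exp_0.
by rewrite S_INR Rmult_plus_distr_r Rmult_1_l exp_plus IH /=; ring.
Qed.

Lemma dwell_pow_lt (k tau_s mu : R) (N : nat) : 0 < k -> 1 <= mu ->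
  INR N * tau_s > ln mu / k -> exp (- k * tau_s) ^ N < 1 / mu.
Proof.
move=> Hk Hmu Hdw.
have Hkd : k * (INR N * tau_s) > ln mu.
  have := Rmult_lt_compat_l k _ _ Hk Hdw.
  by have -> : k * (ln mu / k) = ln mu by field; lra.
rewrite -exp_nat.
have -> : 1 / mu = exp (- ln mu) by rewrite exp_Ropp exp_ln; [rewrite /Rdiv Rmult_1_l| lra].
by apply: exp_increasing; nra.
Qed.

Section SampledStep.
Variables (n : nat) (f : vec n -> vec n) (V : vec n -> vec n -> R).
Variables (alo ahi : R -> R) (kap : R).
Hypothesis HV : dGAS_Lyapunov f V alo ahi kap.
Variable xf : R -> vec n -> vec n.
Hypothesis Hsol : forall x, is_solution f x (fun t => xf t x).
Variables (g : R -> R) (tau eta a c : R).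
Hypothesis Hg : Kinf g.
Hypothesis HVg : forall x y z, Rabs (V x y - V x z) <= g (edist y z).
Hypotheses (Htau : 0 <= tau) (Ha : exp (- kap * tau) <= a) (Hgc : g eta <= c).

(* One sampling period followed by an eta-quantisation: contraction by a plus
   perturbation at most c, so the budget recursion B (i+1) = a B i + c holds. *)
Lemma sampled_step x q q' b : V x q <= b -> edist (xf tau q) q' <= eta ->
  V (xf tau x) q' <= a * b + c.
Proof.
move=> Hb Hd.
have Hdecay := dGAS_decay HV Hsol x q Htau.
have Hpert := HVg (xf tau x) q' (xf tau q); rewrite edist_sym in Hpert.
have Hgd := Rle_trans _ _ _ (Kinf_mono Hg (edist_pos _ _) Hd) Hgc.
have [_ [Vnn _]] := HV.
have := Rmult_le_compat _ _ _ _ (Rlt_le _ _ (exp_pos (- kap * tau))) (Vnn x q) Ha Hb.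
have := Rle_abs (V (xf tau x) q' - V (xf tau x) (xf tau q)); lra.
Qed.

End SampledStep.

Section SublevelBisimulation.
Variables (n m N : nat) (xflow : 'I_m -> R -> vec n -> vec n) (tau_s eta eps : R).
Variables (V : 'I_m -> vec n -> vec n -> R) (B : nat -> R).
Hypothesis Heta : 0 < eta.
Hypothesis Hstep : forall p p' (i i' : 'I_N) x q q', mode_step p i p' i' ->
  V p x q <= B i -> edist (xflow p tau_s q) q' <= eta -> V p' (xflow p tau_s x) q' <= B i'.
Hypothesis Hdist : forall p x q j, V p x q <= B j -> edist x q <= eps.
Hypothesis Hinit : forall p x q, edist x q <= eta -> V p x q <= B 0%nat.

Definition sublevel_rel (q1 : TQ (T_exact N xflow tau_s))
  (q2 : TQ (T_abs N xflow tau_s eta)) : Prop :=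
  q2.1.2 = q1.1.2 /\ q2.2 = q1.2 /\ V q1.1.2 q1.1.1 (proj1_sig q2.1.1) <= B q1.2.

(* Matching transitions exist: a concrete step is matched by rounding the
   sampled successor to the lattice, an abstract step by the exact successor. *)
Lemma sublevel_bisim_rel : approx_bisim_rel (@edist n) eps sublevel_rel.
Proof.
rewrite /sublevel_rel => [[[x p] i]] [[qq p2] i2] /= [-> [-> HB]].
split; first exact: Hdist HB.
split.
- move=> l [[x' p'] i'] /= [-> [-> Hms]].
  have [qv [Hl Hd]] := lattice_near Heta (xflow p tau_s (proj1_sig qq)).
  exists ((exist _ qv Hl, p'), i') => /=; split; first by split.
  by do 2!split => //; exact: Hstep Hms HB Hd.
- move=> l [[qv' p'] i'] /= [-> [Hd Hms]].
  exists ((xflow p tau_s x, p'), i') => /=; split; first by split.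
  by do 2!split => //; exact: Hstep Hms HB Hd.
Qed.

Lemma sublevel_bisimilar :
  approx_bisimilar (@edist n) (T_exact N xflow tau_s) (T_abs N xflow tau_s eta) eps.
Proof.
exists sublevel_rel; split; first exact: sublevel_bisim_rel.
rewrite /sublevel_rel; split.
- move=> [[x p] i] /= Hi.
  have [qv [Hl Hd]] := lattice_near Heta x.
  exists ((exist _ qv Hl, p), i) => /=; split => //; do 2!split => //.
  by rewrite Hi; exact: Hinit.
- move=> [[qq p] i] /= Hi.
  exists ((proj1_sig qq, p), i) => /=; split => //; do 2!split => //.
  by rewrite Hi; apply: Hinit; rewrite edist_self; lra.
Qed.

End SublevelBisimulation.

Lemma bisimilar_without_modes n m N (xflow : 'I_m -> R -> vec n -> vec n) tau_s eta eps :
  ~ inhabited 'I_m ->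
  approx_bisimilar (@edist n) (T_exact N xflow tau_s) (T_abs N xflow tau_s eta) eps.
Proof.
move=> Hno; exists (fun _ _ => False); split; first by [].
by split => q _; case: Hno; constructor; exact: q.1.2.
Qed.

Section SwitchedBudget.
Variables (n m N : nat) (f : 'I_m -> vec n -> vec n) (xflow : 'I_m -> R -> vec n -> vec n).
Hypothesis Hflow : forall p x, is_solution (f p) x (fun t => xflow p t x).
Variables (V : 'I_m -> vec n -> vec n -> R) (alo ahi : 'I_m -> R -> R) (kap : 'I_m -> R).
Hypothesis HV : forall p, dGAS_Lyapunov (f p) (V p) (alo p) (ahi p) (kap p).
Variable mu : R.
Hypothesis Hmu : forall p p' x y, V p x y <= mu * V p' x y.
Variable gam : 'I_m -> R -> R.
Hypothesis Hgam : forall p, Kinf (gam p).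
Hypothesis HVgam : forall p x y z, Rabs (V p x y - V p x z) <= gam p (edist y z).
Variables (tau_s eta eps a A c : R).
Hypotheses (HN : (0 < N)%nat) (Hmu0 : 0 <= mu) (Hts : 0 <= tau_s).
Hypotheses (Heta : 0 < eta) (Heps : 0 <= eps).
Hypotheses (Ha : 0 < a < 1) (Hc : c <= (1 - a) * A) (Hsw : mu * budget a A c N <= A).
Hypothesis Hrate : forall p, exp (- kap p * tau_s) <= a.
Hypothesis Hgam_eta : forall p, gam p eta <= c.
Hypothesis Hahi_eta : forall p, ahi p eta <= A.
Hypothesis Halo_eps : forall p, A <= alo p eps.

Lemma switched_bisimilar :
  approx_bisimilar (@edist n) (T_exact N xflow tau_s) (T_abs N xflow tau_s eta) eps.
Proof.
have [Ha0 Ha1] := Ha.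
have Hbnd p x y : alo p (edist x y) <= V p x y <= ahi p (edist x y).
  by have [_ [_ [_ [_ [_ [H _]]]]]] := HV p; apply: H.
apply: (sublevel_bisimilar (V := V) (B := budget a A c)) => //.
- move=> p p' i i' x q q' Hms HB Hd.
  apply: (budget_mode Ha0 Ha1 Hc (W := fun r => V r (xflow p tau_s x) q') HN Hmu0 Hsw
    _ Hms); first by move=> r r'; apply: Hmu.
  rewrite -budget_S //.
  exact: (sampled_step (HV p) (Hflow p) (Hgam p) (HVgam p) Hts (Hrate p) (Hgam_eta p)
    HB Hd).
- move=> p x q j HB; have [_ [_ [Hlo _]]] := HV p.
  apply: (Kinf_le_inv Hlo); first lra.
  have := budget_le Ha0 Ha1 Hc j; have := Halo_eps p; have := Hbnd p x q; lra.
- move=> p x q Hd; rewrite budget_0 //; have [_ [_ [_ [Hhi _]]]] := HV p.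
  have := Kinf_mono Hhi (edist_pos x q) Hd; have := Hbnd p x q; have := Hahi_eta p; lra.
Qed.

End SwitchedBudget.

Unset Implicit Arguments.

(* Main theorem: with k = min_p kappa_p, A = min_p alo_p(eps), a = exp(-k tau_s)
   and the constant c of the statement, the hypotheses of switched_bisimilar
   follow from the dwell-time condition and the bound on eta. *)
Theorem theorem6
  (n m : nat)
  (f : 'I_m -> vec n -> vec n)
  (xflow : 'I_m -> R -> vec n -> vec n)
  (Hlip : forall p, locally_lipschitz (f p))
  (Hflow : forall p x, is_solution (f p) x (fun t => xflow p t x))
  (V : 'I_m -> vec n -> vec n -> R)
  (alo ahi : 'I_m -> R -> R) (kap : 'I_m -> R)
  (HV : forall p, dGAS_Lyapunov (f p) (V p) (alo p) (ahi p) (kap p))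
  (mu : R) (Hmu1 : 1 <= mu)
  (Hmu : forall p p' x y, V p x y <= mu * V p' x y)
  (gam : 'I_m -> R -> R)
  (Hgam : forall p, Kinf (gam p))
  (HVgam : forall p x y z, Rabs (V p x y - V p x z) <= gam p (edist y z))
  (tau_s eta eps : R) (N : nat)
  (Hts : 0 < tau_s) (Heta : 0 < eta) (Heps : 0 < eps) (HN : (0 < N)%nat)
  (tau_d : R) (Htd : tau_d = INR N * tau_s)
  (Hdwell : tau_d > ln mu / fmin kap)
  (Heta_bound :
     let alo_min := fun r => fmin (fun p => alo p r) in
     let ahi_max := fun r => fmax (fun p => ahi p r) in
     let gam_max := fun r => fmax (fun p => gam p r) in
     let k := fmin kap in
     eta <= Rmin
       (Kinv gam_max ((1 / mu - exp (- k * tau_d)) / (1 - exp (- k * tau_d))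
                       * (1 - exp (- k * tau_s)) * alo_min eps))
       (Kinv ahi_max (alo_min eps))) :
  approx_bisimilar (@edist n) (T_exact N xflow tau_s) (T_abs N xflow tau_s eta) eps.
Proof.
case: (classic (inhabited 'I_m)) => [[p0]|Hno]; last exact: bisimilar_without_modes.
move: Heta_bound; cbv zeta.
set k := fmin kap; set A := fmin (fun p => alo p eps); set a := exp (- k * tau_s).
have Hk : 0 < k by apply: (fmin_gt p0) => p; have [_ [_ [_ [_ []]]]] := HV p.
have Ha : 0 < a < 1.
  by split; [apply: exp_pos | rewrite /a -exp_0; apply: exp_increasing; nra].
have HA : 0 < A.
  apply: (fmin_gt p0) => p; have [_ [_ [[alo0 [_ [Hinc _]]] _]]] := HV p.
  by rewrite -alo0; apply: Hinc; lra.
have -> : exp (- k * tau_d) = a ^ N by rewrite /a -exp_nat Htd; congr exp; ring.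
have HaN : a ^ N < 1 / mu by apply: dwell_pow_lt => //; rewrite -Htd.
have [Hc0 [Hc1 Hsw]] := budget_constants Ha HA Hmu1 HaN.
set c := (1 / mu - a ^ N) / (1 - a ^ N) * (1 - a) * A in Hc0 Hc1 Hsw * => Heta_bound.
apply: (switched_bisimilar Hflow HV Hmu Hgam HVgam (c := c) HN _ _ Heta _ Ha Hc1
  (Req_le _ _ Hsw)); try lra.
- move=> p; have Hkp : - kap p * tau_s <= - k * tau_s.
    by have := fmin_le kap p; rewrite -/k; nra.
  by case: (Rle_lt_or_eq_dec _ _ Hkp) => [/exp_increasing|->]; rewrite /a; lra.
- by apply: (fmax_Kinv_le p0 Hgam Hc0); [lra | exact: Rle_trans Heta_bound (Rmin_l _ _)].
- have Hahi p : Kinf (ahi p) by have [_ [_ [_ [H _]]]] := HV p.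
  apply: (fmax_Kinv_le p0 Hahi HA); first lra.
  exact: Rle_trans Heta_bound (Rmin_r _ _).
- by move=> p; apply: fmin_le.
Qed.
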